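(* Consider $m$-th B-spline boosted quantum phase estimation with $l$ ancilla qubits, as described in the context, applied to an eigenstate of $U$ with phase parameter $E$. For a target failure probability $\delta\in(0,1)$ and a target (normalised) confidence-interval width $\epsilon\in(0,1)$, take the B-spline order $m = O(\log \frac{1}{\delta})$. Then the probability of measuring an outcome outside a normalised confidence interval of width $\epsilon$ around the true phase is at most $\delta$ provided the number of ancilla qubits is $l = O\left(\log \frac{1}{\epsilon} + \log\log \frac{1}{\delta}\right)$.
   Context: Quantum phase estimation (QPE): let $U$ be a unitary and $\ket{\psi}$ an eigenstate of $U$. With $l$ ancilla qubits whose basis states are labelled by integers $x\in\{-2^{l-1}+1,\dots,2^{l-1}\}$, one prepares a ''window state'' $\frac{1}{\tilde{\mathcal N}}\sum_x w(x)\ket{x}$ on the ancillas, applies $U^x$ to $\ket{\psi}$ controlled on the ancilla value $x$ (producing a phase $e^{iEx}$, where $E$ is the eigenphase in units of the ancilla grid), then applies the inverse quantum Fourier transform to the ancillas and measures them, obtaining an integer $k$ as an estimate of $E$. For the $m$-th B-spline window (the $m$-fold self-convolution of the rectangular function, a piecewise polynomial of degree $m-1$ with $m$ pieces, suitably rescaled to the ancilla grid), the resulting post-QPE ancilla state is $\frac{1}{\mathcal N}\sum_{k=-2^{l-1}+1}^{2^{l-1}} \left(\frac{\sin\frac{(k-E)\pi}{m}}{\frac{(k-E)\pi}{m}}\right)^m\ket{k}\ket{\psi}$, with $\mathcal N$ the normalising constant. The tail probability $\delta$ is the probability of measuring $k$ with $|k-E|>m$, i.e. outside the confidence interval $E\pm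 m$; in normalised units (dividing by $2^l$) this confidence interval has width $\epsilon = 2m/2^l$. *)

From Stdlib Require Import Reals Lra Lia.
Open Scope R_scope.

Definition sinc (x : R) : R :=
  if Req_EM_T x 0 then 1 else sin x / x.

(* Unnormalised amplitude of outcome k in the post-QPE ancilla state
   for the m-th B-spline window and eigenphase E (grid units):
   (sin((k-E)pi/m) / ((k-E)pi/m))^m. *)
Definition bspline_amp (m : nat) (E k : R) : R :=
  (sinc ((k - E) * PI / INR m)) ^ m.

(* The i-th ancilla outcome, i = 0 .. 2^l - 1, is the integer
   k = i + 1 - 2^(l-1), so k ranges over {-2^(l-1)+1, ..., 2^(l-1)}. *)
Definition outcome (l i : nat) : R := INR i + 1 - 2 ^ (l - 1).

Definition total_weight (m l : nat) (E : R) : R :=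
  sum_f_R0 (fun i => (bspline_amp m E (outcome l i)) ^ 2) (2 ^ l - 1)%nat.

Definition prob_outside (m l : nat) (E eps : R) : R :=
  sum_f_R0 (fun i =>
     if Rlt_dec (eps / 2) (Rabs ((outcome l i - E) / 2 ^ l))
     then (bspline_amp m E (outcome l i)) ^ 2 else 0) (2 ^ l - 1)%nat
  / total_weight m l E.

From Stdlib Require Import Reals Lra Lia ZArith.
Open Scope R_scope.

(* Some outcome lies within distance 1 of E, and |sinc y| >= 1/3 for |y| <= 2,
   so the total weight is at least 9^-m.  Every outcome in the tail lies at
   distance more than L = eps 2^l / 2 from E, so |sinc y| <= 1/|y| bounds its
   weight by (m / (3 L))^(2m).  Summing over at most 2^l tail outcomes, the tail
   probability is at most 2^l (2m / (eps 2^l))^(2m), which is at most 16^-m once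
   2^l >= 64 m^2 / eps^2.  Hence m ~ ln(1/delta) and l ~ 2 log2(8m/eps) suffice. *)

Lemma exists_nat_ceil x : 0 <= x -> exists n : nat, x < INR n <= x + 1.
Proof.
  intros Hx. destruct (archimed x) as [Hup1 Hup2].
  assert (Hup0 : (0 <= up x)%Z) by (apply le_IZR; lra).
  exists (Z.to_nat (up x)). rewrite INR_IZR_INZ, Z2Nat.id by exact Hup0. lra.
Qed.

Lemma Rlt_pow_of_ln x b n : 0 < x -> 0 < b -> ln x < INR n * ln b -> x < b ^ n.
Proof.
  intros Hx Hb Hln. rewrite <- Rpower_pow, <- (exp_ln x) by assumption.
  apply exp_increasing. exact Hln.
Qed.

Lemma ln_2_lt_1 : ln 2 < 1.
Proof.
  rewrite <- (ln_exp 1). apply ln_increasing; [lra|].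
  pose proof (exp_ineq1 1 ltac:(lra)). lra.
Qed.

Lemma ln_1_div_gt_0 x : 0 < x < 1 -> 0 < ln (1 / x).
Proof.
  intros Hx. rewrite <- ln_1. apply ln_increasing; [lra|].
  apply (Rmult_lt_reg_r x); [lra|]. unfold Rdiv. rewrite Rmult_assoc, Rinv_l; lra.
Qed.

Lemma exists_pow2_gt x :
  1 <= x -> exists l : nat, (1 <= l)%nat /\ x < 2 ^ l /\ INR l <= 1 + 2 * ln x.
Proof.
  intros Hx. pose proof ln_lt_2.
  assert (Hlnx : 0 <= ln x).
  { destruct (Req_dec x 1) as [->|Hx1]; [rewrite ln_1; lra|].
    rewrite <- ln_1. left. apply ln_increasing; lra. }
  assert (Hratio : ln x / ln 2 <= 2 * ln x).
  { apply (Rmult_le_reg_r (ln 2)); [lra|].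
    unfold Rdiv. rewrite Rmult_assoc, Rinv_l by lra. nra. }
  assert (Hratio0 : 0 <= ln x / ln 2) by (apply Rle_mult_inv_pos; lra).
  destruct (exists_nat_ceil (ln x / ln 2) Hratio0) as [l [Hl1 Hl2]].
  exists l. split; [|split].
  - destruct l as [|l]; [simpl in Hl1; lra|lia].
  - apply Rlt_pow_of_ln; [lra|lra|].
    apply (Rmult_lt_compat_r (ln 2)) in Hl1; [|lra].
    unfold Rdiv in Hl1. rewrite Rmult_assoc, Rinv_l, Rmult_1_r in Hl1 by lra. exact Hl1.
  - lra.
Qed.

Lemma exists_ancilla_count m eps :
  1 <= INR m -> 0 < eps < 1 ->
  exists l : nat, (1 <= l)%nat /\ 64 * INR m ^ 2 <= eps ^ 2 * 2 ^ l /\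
    INR l <= 13 + 4 * ln (INR m) + 4 * ln (1 / eps).
Proof.
  intros Hm Heps.
  destruct (exists_pow2_gt ((8 * INR m / eps) ^ 2)) as [l [Hl [Hgrid Hlbound]]].
  { apply pow_R1_Rle. apply (Rmult_le_reg_r eps); [lra|].
    unfold Rdiv. rewrite Rmult_assoc, Rinv_l; lra. }
  exists l. split; [exact Hl|]. split.
  - replace (64 * INR m ^ 2) with ((8 * INR m / eps) ^ 2 * eps ^ 2) by (field; lra).
    rewrite Rmult_comm. left. apply Rmult_lt_compat_l; [apply pow_lt; lra|exact Hgrid].
  - replace (8 * INR m / eps) with (2 ^ 3 * (INR m * (1 / eps))) in Hlbound by (field; lra).
    rewrite ln_pow, ln_mult, ln_mult, ln_pow in Hlbound
      by (repeat (apply Rdiv_lt_0_compat || apply Rmult_lt_0_compat || apply pow_lt); lra).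
    replace (INR 2) with 2 in Hlbound by (simpl; lra).
    replace (INR 3) with 3 in Hlbound by (simpl; lra).
    pose proof ln_2_lt_1. lra.
Qed.

Lemma inv_pow16_lt delta m : 0 < delta -> ln (1 / delta) < INR m -> / 16 ^ m < delta.
Proof.
  intros Hdelta Hm.
  assert (Hln16 : 1 < ln 16).
  { replace 16 with (2 ^ 4) by ring. rewrite ln_pow by lra. simpl INR. pose proof ln_lt_2. lra. }
  assert (H16 : 1 / delta < 16 ^ m).
  { apply Rlt_pow_of_ln; [apply Rdiv_lt_0_compat|..]; try lra.
    pose proof (pos_INR m). nra. }
  unfold Rdiv in H16. rewrite Rmult_1_l in H16.
  rewrite <- (Rinv_inv delta). apply Rinv_lt_contravar; [|exact H16].
  apply Rmult_lt_0_compat; [apply Rinv_0_lt_compat|apply pow_lt]; lra.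
Qed.

Lemma sum_f_R0_ge_term (f : nat -> R) n i :
  (forall j, 0 <= f j) -> (i <= n)%nat -> f i <= sum_f_R0 f n.
Proof.
  intros Hf Hi. induction n as [|n IH]; simpl.
  - replace i with 0%nat by lia. lra.
  - destruct (Nat.eq_dec i (S n)) as [->|Hne].
    + pose proof (cond_pos_sum f n Hf). lra.
    + specialize (IH ltac:(lia)). specialize (Hf (S n)). lra.
Qed.

Lemma sin_ge_third a : 0 <= a <= 2 -> a / 3 <= sin a.
Proof.
  intros Ha. destruct (pre_sin_bound a 0 ltac:(lra) ltac:(lra)) as [Hsin _].
  unfold sin_approx, sin_term in Hsin. simpl in Hsin. nra.
Qed.

Lemma sinc_abs_ge_third y : Rabs y <= 2 -> / 3 <= Rabs (sinc y).
Proof.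
  intros Hy. unfold sinc. destruct (Req_EM_T y 0) as [_|Hy0].
  { rewrite Rabs_R1. lra. }
  assert (Heven : sin y / y = sin (Rabs y) / Rabs y).
  { unfold Rabs. destruct (Rcase_abs y); [rewrite sin_neg; field; exact Hy0|reflexivity]. }
  assert (Hpos : 0 < Rabs y) by (apply Rabs_pos_lt; exact Hy0).
  pose proof (sin_ge_third (Rabs y) ltac:(lra)) as Hsin.
  eapply Rle_trans; [|apply Rle_abs]. rewrite Heven.
  apply (Rmult_le_reg_r (Rabs y)); [exact Hpos|].
  unfold Rdiv. rewrite Rmult_assoc, Rinv_l by lra. lra.
Qed.

Lemma sinc_abs_le_inv y : y <> 0 -> Rabs (sinc y) <= / Rabs y.
Proof.
  intros Hy0. unfold sinc. destruct (Req_EM_T y 0) as [|_]; [contradiction|].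
  unfold Rdiv. rewrite Rabs_mult, Rabs_inv.
  pose proof (Rabs_pos_lt y Hy0). pose proof (SIN_bound y).
  rewrite <- (Rmult_1_l (/ Rabs y)) at 2.
  apply Rmult_le_compat_r; [left; apply Rinv_0_lt_compat; lra|].
  apply Rabs_le. lra.
Qed.

Lemma bspline_amp_sqr m E k :
  bspline_amp m E k ^ 2 = Rabs (sinc ((k - E) * PI / INR m)) ^ (m * 2).
Proof. unfold bspline_amp. rewrite pow_mult, RPow_abs, pow2_abs. reflexivity. Qed.

Lemma bspline_amp_sqr_ge m E k :
  (2 <= m)%nat -> Rabs (k - E) <= 1 -> (/ 3) ^ (m * 2) <= bspline_amp m E k ^ 2.
Proof.
  intros Hm Hk. rewrite bspline_amp_sqr.
  apply pow_incr. split; [lra|]. apply sinc_abs_ge_third.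
  assert (Hm2 : 2 <= INR m) by (apply (le_INR 2); exact Hm).
  pose proof PI_RGT_0. pose proof PI_4. pose proof (Rabs_pos (k - E)).
  unfold Rdiv. rewrite !Rabs_mult, Rabs_inv, (Rabs_right PI), (Rabs_right (INR m)) by lra.
  apply (Rmult_le_reg_r (INR m)); [lra|].
  rewrite Rmult_assoc, Rinv_l by lra. nra.
Qed.

Lemma bspline_amp_sqr_le m E k L :
  (0 < m)%nat -> 0 < L -> L < Rabs (k - E) ->
  bspline_amp m E k ^ 2 <= (INR m / (3 * L)) ^ (m * 2).
Proof.
  intros Hm HL Hk. rewrite bspline_amp_sqr.
  assert (Hm0 : 0 < INR m) by (apply lt_0_INR; exact Hm).
  pose proof PI2_3_2.
  assert (Hk0 : k - E <> 0) by (intros H0; rewrite H0, Rabs_R0 in Hk; lra).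
  assert (Hy0 : (k - E) * PI / INR m <> 0).
  { unfold Rdiv. apply Rmult_integral_contrapositive_currified;
      [apply Rmult_integral_contrapositive_currified|apply Rinv_neq_0_compat]; lra. }
  apply pow_incr. split; [apply Rabs_pos|].
  eapply Rle_trans; [apply sinc_abs_le_inv; exact Hy0|].
  unfold Rdiv. rewrite !Rabs_mult, Rabs_inv, (Rabs_right PI), (Rabs_right (INR m)) by lra.
  replace (/ (Rabs (k - E) * PI * / INR m)) with (INR m * / (Rabs (k - E) * PI))
    by (field; split; lra).
  apply Rmult_le_compat_l; [lra|].
  apply Rinv_le_contravar; [lra|]. pose proof (Rabs_pos (k - E)). nra.
Qed.

Lemma exists_outcome_near l E :
  (1 <= l)%nat -> - 2 ^ (l - 1) + 1 <= E <= 2 ^ (l - 1) ->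
  exists i, (i <= 2 ^ l - 1)%nat /\ Rabs (outcome l i - E) <= 1.
Proof.
  intros Hl HE.
  assert (Hhalf : 2 ^ l = 2 * 2 ^ (l - 1)).
  { replace l with (S (l - 1)) at 1 by lia. reflexivity. }
  destruct (exists_nat_ceil (E + 2 ^ (l - 1) - 1) ltac:(lra)) as [[|i] Hi].
  { simpl in Hi. lra. }
  exists i. rewrite S_INR in Hi. split.
  - assert (Hlt : INR i < INR (2 ^ l)).
    { rewrite pow_INR. replace (INR 2) with 2 by (simpl; lra). lra. }
    apply INR_lt in Hlt. lia.
  - unfold outcome. apply Rabs_le. lra.
Qed.

Lemma total_weight_ge m l E :
  (2 <= m)%nat -> (1 <= l)%nat -> - 2 ^ (l - 1) + 1 <= E <= 2 ^ (l - 1) ->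
  (/ 3) ^ (m * 2) <= total_weight m l E.
Proof.
  intros Hm Hl HE. destruct (exists_outcome_near l E Hl HE) as [i [Hi Hnear]].
  unfold total_weight.
  eapply Rle_trans; [|apply (sum_f_R0_ge_term _ _ i); [intros; apply pow2_ge_0|exact Hi]].
  apply bspline_amp_sqr_ge; assumption.
Qed.

Lemma prob_outside_le m l E eps :
  (2 <= m)%nat -> (1 <= l)%nat -> 0 < eps -> - 2 ^ (l - 1) + 1 <= E <= 2 ^ (l - 1) ->
  prob_outside m l E eps <= 2 ^ l * (2 * INR m / (eps * 2 ^ l)) ^ (m * 2).
Proof.
  intros Hm Hl Heps HE. unfold prob_outside.
  assert (HN : 0 < 2 ^ l) by (apply pow_lt; lra).
  assert (HSN : INR (S (2 ^ l - 1)) = 2 ^ l).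
  { replace (S (2 ^ l - 1)) with (2 ^ l)%nat by (pose proof (Nat.pow_nonzero 2 l); lia).
    rewrite pow_INR. reflexivity. }
  set (q := INR m / (3 * (eps * 2 ^ l / 2))).
  assert (Hq : 0 <= q).
  { unfold q. pose proof (pos_INR m). apply Rle_mult_inv_pos; [lra|]. nra. }
  assert (Htail : sum_f_R0 (fun i =>
            if Rlt_dec (eps / 2) (Rabs ((outcome l i - E) / 2 ^ l))
            then bspline_amp m E (outcome l i) ^ 2 else 0) (2 ^ l - 1)
          <= 2 ^ l * q ^ (m * 2)).
  { apply Rle_trans with (sum_f_R0 (fun _ => q ^ (m * 2)) (2 ^ l - 1)).
    2: { rewrite sum_cte, HSN. lra. }
    apply sum_Rle. intros i _.
    destruct (Rlt_dec _ _) as [Hout|]; [|apply pow_le; exact Hq].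
    apply bspline_amp_sqr_le; [lia|nra|].
    unfold Rdiv in Hout. rewrite Rabs_mult, Rabs_inv, (Rabs_right (2 ^ l)) in Hout by lra.
    apply (Rmult_lt_reg_r (/ 2 ^ l)); [apply Rinv_0_lt_compat; lra|].
    replace (eps * 2 ^ l / 2 * / 2 ^ l) with (eps / 2) by (field; lra). exact Hout. }
  pose proof (total_weight_ge m l E Hm Hl HE) as Htot.
  assert (H3 : 0 < (/ 3) ^ (m * 2)) by (apply pow_lt; lra).
  apply Rle_trans with (2 ^ l * q ^ (m * 2) / (/ 3) ^ (m * 2)).
  { apply Rmult_le_compat.
    - apply cond_pos_sum. intros i. destruct (Rlt_dec _ _); [apply pow2_ge_0|lra].
    - left. apply Rinv_0_lt_compat. lra.
    - exact Htail.
    - apply Rinv_le_contravar; assumption. }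
  unfold Rdiv. rewrite pow_inv, Rinv_inv, Rmult_assoc, <- Rpow_mult_distr.
  right. f_equal. f_equal. unfold q. field. lra.
Qed.

Lemma mul_pow_le_inv_pow N b q m :
  1 <= N -> 0 < b -> (1 <= m)%nat -> 0 <= q <= / (b * N) -> N * q ^ m <= / b ^ m.
Proof.
  intros HN Hb Hm Hq.
  assert (HNm : N <= N ^ m) by (rewrite <- (pow_1 N) at 1; apply Rle_pow; assumption).
  assert (Hbm : 0 < b ^ m) by (apply pow_lt; exact Hb).
  apply Rle_trans with (N * / (b ^ m * N ^ m)).
  - apply Rmult_le_compat_l; [lra|].
    rewrite <- Rpow_mult_distr, <- pow_inv. apply pow_incr. exact Hq.
  - replace (N * / (b ^ m * N ^ m)) with (/ b ^ m * (N / N ^ m)) by (field; lra).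
    rewrite <- (Rmult_1_r (/ b ^ m)) at 2.
    apply Rmult_le_compat_l; [left; apply Rinv_0_lt_compat; exact Hbm|].
    apply (Rmult_le_reg_r (N ^ m)); [lra|].
    unfold Rdiv. rewrite Rmult_assoc, Rinv_l by lra. lra.
Qed.

Lemma prob_outside_le_inv_pow16 m l E eps :
  (2 <= m)%nat -> (1 <= l)%nat -> 0 < eps -> 64 * INR m ^ 2 <= eps ^ 2 * 2 ^ l ->
  - 2 ^ (l - 1) + 1 <= E <= 2 ^ (l - 1) -> prob_outside m l E eps <= / 16 ^ m.
Proof.
  intros Hm Hl Heps Hgrid HE.
  eapply Rle_trans; [apply prob_outside_le; assumption|].
  rewrite Nat.mul_comm, pow_mult. apply mul_pow_le_inv_pow; try lra; try lia.
  { apply pow_R1_Rle. lra. }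
  assert (HN : 0 < 2 ^ l) by (apply pow_lt; lra).
  split; [apply pow2_ge_0|].
  replace ((2 * INR m / (eps * 2 ^ l)) ^ 2) with (4 * INR m ^ 2 / (eps ^ 2 * 2 ^ l) * / 2 ^ l)
    by (field; lra).
  rewrite Rinv_mult. apply Rmult_le_compat_r; [left; apply Rinv_0_lt_compat; lra|].
  assert (Hden : 0 < eps ^ 2 * 2 ^ l) by (apply Rmult_lt_0_compat; [apply pow_lt|]; lra).
  apply (Rmult_le_reg_r (16 * (eps ^ 2 * 2 ^ l))); [lra|].
  replace (4 * INR m ^ 2 / (eps ^ 2 * 2 ^ l) * (16 * (eps ^ 2 * 2 ^ l))) with (64 * INR m ^ 2)
    by (field; lra).
  replace (/ 16 * (16 * (eps ^ 2 * 2 ^ l))) with (eps ^ 2 * 2 ^ l) by field.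
  exact Hgrid.
Qed.

Theorem theorem1 :
  exists C : R, 0 < C /\
    forall delta eps : R, 0 < delta < 1 -> 0 < eps < 1 ->
      exists m l : nat,
        (1 <= m)%nat /\ (1 <= l)%nat /\
        INR m <= C * (1 + ln (1 / delta)) /\
        INR l <= C * (1 + ln (1 / eps) + ln (1 + ln (1 / delta))) /\
        forall E : R, - 2 ^ (l - 1) + 1 <= E <= 2 ^ (l - 1) ->
          prob_outside m l E eps <= delta.
Proof.
  exists 17. split; [lra|]. intros delta eps Hdelta Heps.
  set (D := ln (1 / delta)).
  assert (HD : 0 < D) by (apply ln_1_div_gt_0; exact Hdelta).
  destruct (exists_nat_ceil D) as [n [HnD HnD1]]; [lra|].
  assert (Hn : (1 <= n)%nat) by (destruct n as [|n]; [simpl in HnD; lra|lia]).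
  set (m := S n).
  assert (HmD : INR m <= D + 2) by (unfold m; rewrite S_INR; lra).
  assert (Hm1 : 1 <= INR m) by (apply (le_INR 1); unfold m; lia).
  assert (Hlnm : ln (INR m) < 1 + ln (1 + D)).
  { pose proof ln_2_lt_1.
    apply Rlt_trans with (ln (2 * (1 + D))); [apply ln_increasing; lra|].
    rewrite ln_mult by lra. lra. }
  destruct (exists_ancilla_count m eps Hm1 Heps) as [l [Hl [Hgrid Hlbound]]].
  exists m, l. split; [unfold m; lia|]. split; [exact Hl|]. split; [lra|]. split.
  - pose proof (ln_1_div_gt_0 eps Heps).
    assert (0 < ln (1 + D)) by (rewrite <- ln_1; apply ln_increasing; lra).
    lra.
  - intros E HE. apply Rlt_le, Rle_lt_trans with (/ 16 ^ m).
    + apply prob_outside_le_inv_pow16; [unfold m; lia|exact Hl|lra|exact Hgrid|exact HE].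
    + apply inv_pow16_lt; [lra|]. fold D. unfold m. rewrite S_INR. lra.
Qed.
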